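(* Let $0<C<1$, $\epsilon=1/C-1$, $k=b/((1+\epsilon)\ln b)$, and let $b$ be sufficiently large. Let $T$ be a complete tree with branching factor $b$ and let $\sigma$ be a uniformly random proper $k$-coloring of $T$. Then for every vertex $v$ of $T$, the probability that $v$ is not frozen in $\sigma$ is at most $b^{-\epsilon}$. (Leaves are always frozen.)
   Context: For a coloring $\sigma$ of $T$ and a vertex $v$, let $T_v$ be the subtree rooted at $v$ and $L(T_v)$ its leaves. $v$ is frozen in $\sigma$ if every proper coloring $\eta$ of $T$ with $\eta(L(T_v))=\sigma(L(T_v))$ has $\eta(v)=\sigma(v)$. Equivalently, leaves are frozen, and a non-leaf $v$ is frozen iff for every color $c\ne\sigma(v)$ there is a frozen child $w$ of $v$ with $\sigma(w)=c$. *)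

From mathcomp Require Import all_boot.
From Stdlib Require Import Reals.
Set Implicit Arguments. Unset Strict Implicit. Unset Printing Implicit Defensive.

(* Complete b-ary tree of height h: a vertex is a word over 'I_b of length
   d <= h (the path of child indices from the root). The root is the empty
   word; leaves are the words of length h. *)
Definition vtx (b h : nat) : finType := {d : 'I_h.+1 & d.-tuple 'I_b}.

Definition depth b h (v : vtx b h) : nat := tag v.
Definition word b h (v : vtx b h) : seq 'I_b := tagged v.

Definition is_child b h (u w : vtx b h) : bool :=
  (depth u == (depth w).+1) && prefix (word w) (word u).

Definition in_subtree b h (v u : vtx b h) : bool := prefix (word v) (word u).

Definition is_leaf b h (u : vtx b h) : bool := depth u == h.

Definition coloring b h k := {ffun vtx b h -> 'I_k}.

Definition proper b h k (s : coloring b h k) : bool :=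
  [forall u, forall w, is_child u w ==> (s u != s w)].

Definition frozen b h k (s : coloring b h k) (v : vtx b h) : bool :=
  [forall eta : coloring b h k,
     proper eta ==>
     [forall u, (in_subtree v u && is_leaf u) ==> (eta u == s u)] ==>
     (eta v == s v)].

Definition prob_not_frozen (b h k : nat) (v : vtx b h) : R :=
  (INR #|[set s : coloring b h k | proper s && ~~ frozen s v]| /
   INR #|[set s : coloring b h k | proper s]|)%R.

Definition num_colors (eps : R) (b : nat) : nat :=
  Z.to_nat (Int_part (INR b / ((1 + eps) * ln (INR b)))).
Arguments prob_not_frozen : clear implicits.

(* Frozenness has a recursive characterisation on the subtrees.  If the root has
   colour a and is not frozen, some colour c <> a is carried by no frozen child, so
   every child is either coloured outside {a, c} or coloured c and not frozen.  By
   induction on the height the latter happens for a fraction at most p = b^-eps of the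
   proper colourings with a given root colour, and a union bound over c gives a
   fraction at most (k-1) ((k-2+p)/(k-1))^b <= (k-1) exp(-(1-p) b/(k-1)), which is at
   most p since k <= b/((1+eps) ln b) and b is large.  An arbitrary vertex is handled by
   restricting to its subtree: the restriction of a uniform proper colouring is
   uniform, because swapping two colours outside the subtree maps the colourings with
   one restriction bijectively onto those with another. *)

From Pilot Require Import Defs.
From Stdlib Require Import Znat.
From mathcomp Require Import all_boot perm zify.
From Stdlib Require Import Reals Lra.

Set Implicit Arguments.
Unset Strict Implicit.
Unset Printing Implicit Defensive.

Lemma card_bigcup_le (I T : finType) (P : pred I) (F : I -> {set T}) :
  #|\bigcup_(i | P i) F i| <= \sum_(i | P i) #|F i|.
Proof.
elim/big_rec2: _ => [|i n U _ IH]; first by rewrite cards0.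
by apply: leq_trans (leq_card_setU _ _) _; rewrite leq_add2l.
Qed.

Lemma card_fst_ffun (A T : finType) (n : nat) (a : A) (Q : pred T) :
  #|[set x : A * {ffun 'I_n -> T} | (x.1 == a) && [forall i, x.2 i \in Q]]| = expn #|Q| n.
Proof.
rewrite -[n in RHS]card_ord -card_ffun_on -[RHS]mul1n -(card1 a) -cardX.
apply: eq_card => -[x f]; rewrite !inE; congr andb; apply/forallP/ffun_onP => Qf i; exact: Qf.
Qed.

Lemma card_sum_fibers (T I : finType) (f : T -> I) (A : {pred T}) :
  #|A| = \sum_i #|[set x in A | f x == i]|.
Proof.
rewrite -sum1_card (partition_big f predT) //; apply: eq_bigr => i _.
by rewrite -sum1_card; apply: eq_bigl => x; rewrite !inE.
Qed.

Lemma prefix_rcons_notprefix (T : eqType) (w x : seq T) i :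
  prefix w (rcons x i) -> ~~ prefix w x -> w = rcons x i.
Proof.
rewrite !prefixE => /eqP w_take w_x; have [w_le | x_lt] := leqP (size w) (size x).
  by move: w_take; rewrite -cats1 takel_cat // => w_take; rewrite w_take eqxx in w_x.
suff w_size : size w = size (rcons x i) by rewrite -w_take w_size take_size.
by move: (congr1 size w_take); rewrite size_take size_rcons; case: ltnP => //; lia.
Qed.

Lemma prefix_cat_drop (T : eqType) (w x : seq T) : prefix w x -> x = w ++ drop (size w) x.
Proof. by case/prefixP=> r ->; rewrite drop_size_cat. Qed.

Section Estimates.
Local Open Scope R_scope.

Lemma exp_le_compat x y : x <= y -> exp x <= exp y.
Proof. by case=> [/exp_increasing/Rlt_le | ->]; [|apply: Rle_refl]. Qed.

Lemma ln_le_compat x y : 0 < x -> x <= y -> ln x <= ln y.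
Proof. by move=> x0 [/(ln_increasing _ _ x0)/Rlt_le | ->]; [|apply: Rle_refl]. Qed.

Lemma sqr_div4_le_exp t : 0 <= t -> t * t / 4 <= exp t.
Proof.
move=> t0; have -> : exp t = exp (t / 2) * exp (t / 2) by rewrite -exp_plus; congr exp; field.
have := exp_ineq1_le (t / 2); nra.
Qed.

Lemma lin_le_exp c d L : 0 < d -> 0 < L -> 4 * c <= d * d * L -> c * L <= exp (d * L).
Proof.
move=> d0 L0 cL; have /sqr_div4_le_exp : 0 <= d * L by nra.
nra.
Qed.

Lemma pow_one_sub_le_exp q n : 0 <= q <= 1 -> (1 - q) ^ n <= exp (- (q * INR n)).
Proof.
move=> q01; have -> : exp (- (q * INR n)) = exp (- q) ^ n.
  rewrite -Rpower_pow; last exact: exp_pos.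
  by rewrite /Rpower ln_exp; congr exp; ring.
apply: pow_incr; have := exp_ineq1_le (- q); lra.
Qed.

Lemma shifted_pow_le_exp K p n : 1 <= K -> 0 <= p <= 1 ->
  K * (K - 1 + p) ^ n <= K ^ n * (K * exp (- ((1 - p) * INR n / K))).
Proof.
move=> K1 p01; set q := (1 - p) / K.
have Kq : K * q = 1 - p by rewrite /q; field; lra.
have q01 : 0 <= q <= 1 by split; nra.
have -> : K - 1 + p = K * (1 - q) by rewrite /q; field; lra.
have -> : (1 - p) * INR n / K = q * INR n by rewrite /q; field; lra.
have KKn : 0 <= K * K ^ n by have := pow_le K n; nra.
have := Rmult_le_compat_l _ _ _ KKn (pow_one_sub_le_exp n q01).
rewrite Rpow_mult_distr; lra.
Qed.

Lemma exp_tail_le e L K : 0 < e -> 3 <= (1 + e) * L -> (1 + e) * L <= exp (e * L) ->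
  0 < K -> K * ((1 + e) * L) <= exp L ->
  K * exp (- ((1 - exp (- (e * L))) * exp L / K)) <= exp (- (e * L)).
Proof.
set a := (1 + e) * L; set p := exp (- (e * L)) => e0 a3 a_le K0 Ka.
have p0 : 0 < p by apply: exp_pos.
have pa1 : p * a <= 1.
  have <- : p * exp (e * L) = 1 by rewrite /p -exp_plus Rplus_opp_l exp_0.
  by apply: Rmult_le_compat_l; lra.
have p1 : p <= 1 by nra.
have tail : exp (- ((1 - p) * exp L / K)) <= exp (- ((1 - p) * a)).
  have Kt : K * (exp L / K) = exp L by field; lra.
  apply: exp_le_compat; rewrite -Rmult_div_assoc; nra.
have key : exp L * exp (- ((1 - p) * a)) = p * exp (p * a).
  by rewrite /p -!exp_plus /a; congr exp; ring.
have e3 : exp (p * a) <= 3 by have := exp_le_3; have := exp_le_compat pa1; lra.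
have E0 := exp_pos (- ((1 - p) * a)).
have : K * exp (- ((1 - p) * a)) * a <= p * a.
  have := Rmult_le_compat_r _ _ _ (Rlt_le _ _ E0) Ka.
  have := Rmult_le_compat_l _ _ _ (Rlt_le _ _ p0) e3; nra.
move/(Rmult_le_reg_r a); have := Rmult_le_compat_l _ _ _ (Rlt_le _ _ K0) tail; lra.
Qed.

Lemma exists_ln_ge M : exists B : nat, forall b : nat, (B <= b)%nat ->
  0 < INR b /\ M <= ln (INR b).
Proof.
have [up_gt _] := archimed (exp M); have up0 : (0 <= up (exp M))%Z.
  by apply: le_IZR; have := exp_pos M; lra.
exists (Z.to_nat (up (exp M))) => b /leP/le_INR; rewrite INR_IZR_INZ Z2Nat.id // => bM.
have M0 := exp_pos M; split; first lra.
by rewrite -(ln_exp M); apply: ln_le_compat; lra.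
Qed.

Lemma num_colors_spec e b :
  0 < (1 + e) * ln (INR b) -> 3 * ((1 + e) * ln (INR b)) <= INR b ->
  (2 <= num_colors e b)%nat /\ INR (num_colors e b) * ((1 + e) * ln (INR b)) <= INR b.
Proof.
set d := (1 + e) * ln (INR b) => d0 d3; set y := INR b / d.
have yd : y * d = INR b by rewrite /y; field; lra.
have [fl_le fl_gt] := base_Int_part y.
have fl2 : (1 < Int_part y)%Z by apply: lt_IZR; nra.
rewrite /num_colors -/d -/y INR_IZR_INZ Z2Nat.id; last lia.
by split; [lia | nra].
Qed.

Lemma many_colors_bound e : 0 < e -> exists B : nat, forall b : nat, (B <= b)%nat ->
  let k := num_colors e b in let p := Rpower (INR b) (- e) in
  INR k.-1 * (INR (k - 2) + p) ^ b <= p * INR k.-1 ^ b.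
Proof.
move=> e0; set a := 1 + e.
(* With L = ln b beyond this bound: L >= 3, a L <= exp (e L) and 3 a L <= exp L. *)
have [B HB] := exists_ln_ge (3 + 4 * a / (e * e) + 12 * a).
exists B => b /HB [b0 Lge] k p; set L := ln (INR b) in Lge.
have a1 : 1 < a by rewrite /a; lra.
have q0 : 0 < 4 * a / (e * e) by apply: Rdiv_lt_0_compat; nra.
have ee : 4 * a <= e * e * L.
  have -> : 4 * a = e * e * (4 * a / (e * e)) by field; lra.
  by apply: Rmult_le_compat_l; nra.
have x_eq : INR b = exp L by rewrite /L exp_ln.
have [k2 k_le] : (2 <= k)%nat /\ INR k * (a * L) <= INR b.
  apply: num_colors_spec; rewrite -/a -/L; first nra.
  by rewrite -Rmult_assoc x_eq -{2}[L]Rmult_1_l; apply: lin_le_exp; lra.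
set K := INR k.-1.
have K_eq : K = INR k - 1 by rewrite /K -subn1 minus_INR; [rewrite /=; lra | apply/leP; lia].
have K1 : 1 <= K by rewrite K_eq; have := le_INR 2 k (leP k2); rewrite /=; lra.
have -> : INR (k - 2) = K - 1 by rewrite K_eq minus_INR; [rewrite /=; lra | apply/leP].
have p_eq : p = exp (- (e * L)) by rewrite /p /Rpower; congr exp; rewrite /L; ring.
have p01 : 0 <= p <= 1.
  by rewrite p_eq -exp_0; split; [apply: Rlt_le; apply: exp_pos | apply: exp_le_compat; nra].
apply: Rle_trans (shifted_pow_le_exp b K1 p01) _.
rewrite Rmult_comm; apply: Rmult_le_compat_r; first by apply: pow_le; lra.
rewrite x_eq p_eq; apply: exp_tail_le; rewrite -/a //; try nra.
by apply: lin_le_exp; lra.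
Qed.

End Estimates.

Section ColoredTrees.
Variables b k : nat.

(* Colourings of the complete b-ary tree of height m: the root colour together with the
   colourings of the b subtrees of height m - 1. *)
Fixpoint tcol (m : nat) : finType :=
  if m is m'.+1 then ('I_k * {ffun 'I_b -> tcol m'})%type else 'I_k.

Definition root_color {m} : tcol m -> 'I_k :=
  match m with 0 => fun t => t | _.+1 => fun t => t.1 end.

Fixpoint tproper {m} : pred (tcol m) :=
  match m with
  | 0 => predT
  | m'.+1 => fun t => [forall i, tproper (t.2 i) && (root_color (t.2 i) != t.1)]
  end.

Fixpoint tfrozen {m} : pred (tcol m) :=
  match m with
  | 0 => predT
  | m'.+1 => fun t =>
      [forall c, (c != t.1) ==> [exists i, (root_color (t.2 i) == c) && tfrozen (t.2 i)]]
  end.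

Lemma card_by_root_color m c :
  (forall d, #|[set t : tcol m | tproper t & root_color t == d]| = c) ->
  forall P : pred 'I_k, #|[set t : tcol m | tproper t & P (root_color t)]| = #|P| * c.
Proof.
move=> fiber P; rewrite -sum1_card (partition_big root_color P) /=; last first.
  by move=> t; rewrite inE => /andP[].
rewrite -sum_nat_const; apply: eq_bigr => d Pd; rewrite -(fiber d) -sum1_card.
by apply: eq_bigl => t; rewrite !inE; case: eqP => [->|]; rewrite ?Pd ?andbT ?andbF.
Qed.

Fixpoint nproper_root m := if m is m'.+1 then expn (k.-1 * nproper_root m') b else 1.

Lemma card_tproper_root m d :
  #|[set t : tcol m | tproper t & root_color t == d]| = nproper_root m.
Proof.
elim: m d => [|m IH] d /=; first by rewrite -(card1 d); apply: eq_card => t; rewrite !inE.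
rewrite -[k in k.-1](card_ord k) -(cardC1 d) -(card_by_root_color IH (predC1 d)).
rewrite -(card_fst_ffun _ d); apply: eq_card => -[a f]; rewrite !inE.
by rewrite andbC /=; case: eqP => //= ->; apply: eq_forallb => i; rewrite inE.
Qed.

Lemma card_not_tfrozen_succ m a :
  #|[set t : tcol m.+1 | tproper t & (root_color t == a) && ~~ tfrozen t]| <=
  \sum_(c | c != a) expn #|[set t : tcol m | tproper t &
                        (root_color t != a) && ~~ ((root_color t == c) && tfrozen t)]| b.
Proof.
(* A non-frozen root coloured a has a colour c <> a carried by no frozen child. *)
under eq_bigr => c _ do rewrite -(card_fst_ffun _ a).
apply: leq_trans (card_bigcup_le _ _); apply/subset_leq_card/subsetP => -[a' f].
rewrite !inE /= => /andP[proper_f /andP[/eqP <- not_frozen]].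
move: not_frozen; rewrite negb_forall => /existsP[c]; rewrite negb_imply negb_exists.
case/andP=> ca /forallP no_child; apply/bigcupP; exists c => //; rewrite inE eqxx /=.
by apply/forallP => i; rewrite inE; case/andP: (forallP proper_f i) => -> ->; rewrite no_child.
Qed.

Lemma card_tproper_avoid m a c : c != a ->
  #|[set t : tcol m | tproper t &
                      (root_color t != a) && ~~ ((root_color t == c) && tfrozen t)]|
  <= (k - 2) * nproper_root m
     + #|[set t : tcol m | tproper t & (root_color t == c) && ~~ tfrozen t]|.
Proof.
move=> ca; set B := [set t | _ & (_ == c) && _].
pose A := [set t : tcol m | tproper t & [predC pred2 a c] (root_color t)].
have cardA : #|A| = (k - 2) * nproper_root m.
  rewrite (card_by_root_color (card_tproper_root m)); congr (_ * _).
  have := cardC (pred2 a c); rewrite card2 card_ord eq_sym ca => card_k.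
  by rewrite -[X in X - 2]card_k addKn.
rewrite -cardA; apply: leq_trans (leq_card_setU A B); apply/subset_leq_card/subsetP => t.
rewrite !inE; case/andP=> -> /andP[ta]; case: eqP => [_ -> | _] /=; first by rewrite orbT.
by rewrite !orbF ta.
Qed.

Fixpoint col_at {m} : tcol m -> seq 'I_b -> 'I_k :=
  match m with
  | 0 => fun t _ => t
  | m'.+1 => fun t r => if r is i :: r' then col_at (t.2 i) r' else t.1
  end.

Lemma col_at_nil m (t : tcol m) : col_at t [::] = root_color t.
Proof. by case: m t. Qed.

Lemma col_at_inj m (t t' : tcol m) :
  (forall r, size r <= m -> col_at t r = col_at t' r) -> t = t'.
Proof.
elim: m t t' => [|m IH] t t' eq_col; first exact: (eq_col [::]).
case: t t' eq_col => [a f] [a' f'] eq_col; congr pair; first exact: (eq_col [::]).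
by apply/ffunP => i; apply: IH => r r_le; apply: (eq_col (i :: r)).
Qed.

Lemma tproper_col_at m (t : tcol m) r i :
  tproper t -> size r < m -> col_at t (rcons r i) != col_at t r.
Proof.
elim: m t r => [|m IH] t [|j r] //= /forallP t_proper.
  by rewrite col_at_nil; case/andP: (t_proper i).
rewrite ltnS => r_lt; case/andP: (t_proper j) => tj _; exact: IH.
Qed.

End ColoredTrees.

Section RealCounting.
Local Open Scope R_scope.

Lemma INR_expn (a n : nat) : INR (expn a n) = INR a ^ n.
Proof. by elim: n => //= n IH; rewrite expnS mult_INR IH. Qed.

Lemma INR_sum_le (I : finType) (P : pred I) (F : I -> nat) (X : R) :
  (forall i, P i -> INR (F i) <= X) -> INR (\sum_(i | P i) F i) <= INR #|P| * X.
Proof.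
move=> FX; rewrite -sum1_card.
elim/big_rec2: _ => [|i c n Pi IH]; first by rewrite /=; lra.
by rewrite !plus_INR /=; have := FX i Pi; lra.
Qed.

Variables (b k : nat) (p : R).
Hypothesis p_ge0 : 0 <= p.
Hypothesis colors_ineq : INR k.-1 * (INR (k - 2) + p) ^ b <= p * INR k.-1 ^ b.

Lemma card_not_tfrozen_root m a :
  INR #|[set t : tcol b k m | tproper t & (root_color t == a) && ~~ tfrozen t]|
  <= p * INR (nproper_root b k m).
Proof.
elim: m a => [|m IH] a.
  by rewrite (@eq_card0 _ [set t | _]) => [/=|t]; [lra | rewrite !inE andbF].
apply: Rle_trans (le_INR _ _ (leP (card_not_tfrozen_succ b m a))) _.
apply: Rle_trans (INR_sum_le (X := ((INR (k - 2) + p) * INR (nproper_root b k m)) ^ b) _) _.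
  move=> c ca; rewrite INR_expn; apply: pow_incr; split; first exact: pos_INR.
  apply: Rle_trans (le_INR _ _ (leP (card_tproper_avoid b m ca))) _.
  by rewrite plus_INR mult_INR; have := IH c; lra.
have -> : #|[pred c : 'I_k | c != a]| = k.-1 by have := cardC1 a; rewrite card_ord => <-.
rewrite /= INR_expn mult_INR !Rpow_mult_distr -!Rmult_assoc.
by apply: Rmult_le_compat_r; first exact: pow_le (pos_INR _).
Qed.

Lemma tfrozen_ratio m :
  INR #|[set t : tcol b k m | tproper t & ~~ tfrozen t]|
  <= p * INR #|[set t : tcol b k m | tproper t]|.
Proof.
have -> : #|[set t : tcol b k m | tproper t]| = (#|'I_k| * nproper_root b k m)%nat.
  rewrite -(card_by_root_color (card_tproper_root b m) predT).
  by apply: eq_card => t; rewrite !inE andbT.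
rewrite (card_sum_fibers (@root_color b k m)) mult_INR -Rmult_assoc (Rmult_comm p) Rmult_assoc.
apply: INR_sum_le => d _; apply: Rle_trans (card_not_tfrozen_root m d); apply: Req_le.
by apply: f_equal; apply: eq_card => t; rewrite !inE -andbA (andbC (~~ _)).
Qed.

End RealCounting.

Section CompleteTree.
Variables b h k : nat.

Definition root_vtx : vtx b h := existT _ ord0 [tuple].

(* The vertex with word [w]; junk value [root_vtx] when [h < size w]. *)
Definition vtx_of (w : seq 'I_b) : vtx b h :=
  odflt root_vtx [pick u : vtx b h | word u == w].

Lemma size_word (u : vtx b h) : size (word u) = depth u.
Proof. exact: size_tuple. Qed.

Lemma depth_le (u : vtx b h) : depth u <= h.
Proof. by rewrite -ltnS ltn_ord. Qed.

Lemma size_word_le (u : vtx b h) : size (word u) <= h.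
Proof. by rewrite size_word depth_le. Qed.

Lemma word_inj : injective (@word b h).
Proof.
move=> [d t] [d' t'] /= eq_tt'; have eq_dd' : d = d'.
  by apply: val_inj; rewrite /= -(size_tuple t) -(size_tuple t'); congr size.
by subst d'; congr existT; apply: val_inj.
Qed.

Lemma word_vtx_of w : size w <= h -> word (vtx_of w) = w.
Proof.
rewrite -ltnS => w_le; rewrite /vtx_of; case: pickP => [u /eqP // | no_vtx].
by have := no_vtx (existT _ (Ordinal w_le) (in_tuple w)); rewrite /= /word /= eqxx.
Qed.

Lemma vtx_of_word u : vtx_of (word u) = u.
Proof. by apply: word_inj; rewrite word_vtx_of ?size_word_le. Qed.

Lemma is_childP (u w : vtx b h) :
  reflect (exists i, word u = rcons (word w) i) (is_child u w).
Proof.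
apply: (iffP andP) => [[/eqP du /prefixP[[|i [|j r]] eq_u]] | [i eq_u]].
- by move: du; rewrite -!size_word eq_u size_cat /=; lia.
- by exists i; rewrite eq_u cats1.
- by move: du; rewrite -!size_word eq_u size_cat /=; lia.
- by rewrite -!size_word eq_u size_rcons prefix_rcons.
Qed.

Lemma properP (s : coloring b h k) :
  reflect (forall u w, is_child u w -> s u != s w) (Defs.proper s).
Proof.
apply: (iffP forallP) => [s_proper u w | s_proper u].
  by move/forallP/(_ w)/implyP: (s_proper u).
by apply/forallP => w; apply/implyP/s_proper.
Qed.

Fixpoint subtree_col (s : coloring b h k) m (w : seq 'I_b) : tcol b k m :=
  match m with
  | 0 => s (vtx_of w)
  | m'.+1 => (s (vtx_of w), [ffun i => subtree_col s m' (rcons w i)])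
  end.

Lemma root_color_subtree_col s m w : root_color (subtree_col s m w) = s (vtx_of w).
Proof. by case: m. Qed.

Lemma col_at_subtree_col s m w r :
  size r <= m -> col_at (subtree_col s m w) r = s (vtx_of (w ++ r)).
Proof.
elim: m w r => [|m IH] w [|i r] //=; rewrite ?cats0 // ltnS ffunE => r_le.
by rewrite IH // cat_rcons.
Qed.

Lemma tproper_subtree_col s m w :
  Defs.proper s -> size w + m <= h -> tproper (subtree_col s m w).
Proof.
move/properP=> s_proper; elim: m w => [|m IH] w //= w_le.
have w_le' : size w <= h by apply: leq_trans w_le; apply: leq_addr.
apply/forallP => i; rewrite ffunE IH ?size_rcons ?addSnnS //= root_color_subtree_col.
apply/s_proper/is_childP; exists i; rewrite !word_vtx_of // size_rcons.
by apply: leq_trans w_le; rewrite addnS ltnS leq_addr.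
Qed.

Lemma tfrozen_subtree_col_agree (s eta : coloring b h k) m w :
  Defs.proper eta -> size w + m = h -> tfrozen (subtree_col s m w) ->
  (forall u, prefix w (word u) -> is_leaf u -> eta u = s u) ->
  eta (vtx_of w) = s (vtx_of w).
Proof.
move/properP=> eta_proper; elim: m w => [|m IH] w w_size.
  move=> _ agree; rewrite addn0 in w_size.
  have w_word : word (vtx_of w) = w by rewrite word_vtx_of ?w_size.
  by apply: agree; rewrite ?w_word ?prefix_refl // /is_leaf -size_word w_word w_size.
move=> /= /forallP s_frozen agree; apply/eqP; apply: contraT => eta_ne.
have /existsP[i /andP[]] := implyP (s_frozen (eta (vtx_of w))) eta_ne.
rewrite !ffunE root_color_subtree_col => /eqP child_col child_frozen.
have w_le : size (rcons w i) <= h by rewrite size_rcons -w_size addnS ltnS leq_addr.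
have eta_child : eta (vtx_of (rcons w i)) = s (vtx_of (rcons w i)).
  apply: IH => // [|u w_u]; first by rewrite size_rcons addSnnS.
  by apply: agree; apply: prefix_trans w_u; apply: prefix_rcons.
suff /eta_proper : is_child (vtx_of (rcons w i)) (vtx_of w).
  by rewrite eta_child child_col eqxx.
by apply/is_childP; exists i; rewrite !word_vtx_of //; move: w_le; rewrite size_rcons; lia.
Qed.

Lemma tfrozen_frozen (s : coloring b h k) v :
  tfrozen (subtree_col s (h - depth v) (word v)) -> frozen s v.
Proof.
move=> s_frozen; apply/forallP => eta; apply/implyP => eta_proper.
apply/implyP => /forallP agree.
have := tfrozen_subtree_col_agree eta_proper _ s_frozen; rewrite vtx_of_word => -> //.
  by rewrite size_word subnKC // depth_le.
by move=> u v_u u_leaf; apply/eqP; move/implyP: (agree u); apply; rewrite /in_subtree v_u.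
Qed.

End CompleteTree.

Section Regluing.
Variables b h k m : nat.
Variable w : seq 'I_b.
Hypothesis w_size : size w + m = h.

Local Notation restr s := (subtree_col s m w).

(* Put [t'] below [w] and swap the root colours of [t] and [t'] elsewhere: if [s] is
   proper with [restr s = t], the result is proper with restriction [t']. *)
Definition reglue (t t' : tcol b k m) (s : coloring b h k) : coloring b h k :=
  [ffun u => if prefix w (word u) then col_at t' (drop (size w) (word u))
             else tperm (root_color t) (root_color t') (s u)].

Lemma size_drop_word (u : vtx b h) : prefix w (word u) -> size (drop (size w) (word u)) <= m.
Proof. by move=> w_u; rewrite size_drop leq_subLR w_size size_word_le. Qed.

Lemma subtree_col_reglue t t' s : restr (reglue t t' s) = t'.
Proof.
apply: col_at_inj => r r_le; rewrite col_at_subtree_col // ffunE.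
by rewrite word_vtx_of ?prefix_prefix ?drop_size_cat // size_cat -w_size leq_add2l.
Qed.

Lemma reglueK t t' s : restr s = t -> reglue t' t (reglue t t' s) = s.
Proof.
move=> s_t; apply/ffunP => u; rewrite !ffunE.
case: ifP => w_u; last by rewrite w_u tpermC tpermK.
rewrite -s_t col_at_subtree_col ?size_drop_word //.
by rewrite -prefix_cat_drop // vtx_of_word.
Qed.

Lemma reglue_proper t t' s :
  Defs.proper s -> restr s = t -> tproper t' -> Defs.proper (reglue t t' s).
Proof.
move=> /properP s_proper s_t t'_proper.
apply/properP => u v /[dup] /s_proper s_uv /is_childP[i u_v].
have v_u : prefix (word v) (word u) by rewrite u_v prefix_rcons.
rewrite !ffunE; case w_v: (prefix w (word v)).
  rewrite (prefix_trans w_v v_u); have v_eq := prefix_cat_drop w_v.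
  set r := drop (size w) (word v) in v_eq *.
  have -> : drop (size w) (word u) = rcons r i by rewrite u_v v_eq rcons_cat drop_size_cat.
  apply: tproper_col_at => //.
  by rewrite -(ltn_add2l (size w)) w_size -size_cat -v_eq -(size_rcons _ i) -u_v size_word_le.
case w_u: (prefix w (word u)); last by rewrite (inj_eq perm_inj).
have w_eq : w = word u by rewrite u_v; apply: prefix_rcons_notprefix; rewrite -?u_v ?w_v.
rewrite w_eq drop_size col_at_nil -{1}(tpermL (root_color t) (root_color t')).
rewrite (inj_eq perm_inj).
by rewrite -s_t root_color_subtree_col w_eq vtx_of_word.
Qed.

Definition restr_fiber t := [set s : coloring b h k | Defs.proper s & restr s == t].

Lemma card_restr_fiber_le t t' :
  tproper t -> tproper t' -> #|restr_fiber t| <= #|restr_fiber t'|.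
Proof.
move=> t_proper t'_proper; rewrite -(@card_in_imset _ _ (reglue t t')); last first.
  move=> s1 s2; rewrite !inE => /andP[_ /eqP s1_t] /andP[_ /eqP s2_t] eq_s.
  by rewrite -(reglueK t' s1_t) eq_s reglueK.
apply/subset_leq_card/subsetP => _ /imsetP[s + ->]; rewrite !inE => /andP[s_proper /eqP s_t].
by rewrite reglue_proper // subtree_col_reglue eqxx.
Qed.

Lemma card_restr_uniform : exists F, forall P : pred (tcol b k m),
  #|[set s : coloring b h k | Defs.proper s & P (restr s)]| = #|[set t | tproper t & P t]| * F.
Proof.
have card_sum P : #|[set s : coloring b h k | Defs.proper s & P (restr s)]| =
    \sum_(t | tproper t && P t) #|restr_fiber t|.
  rewrite -sum1_card (partition_big (fun s => restr s) (fun t => tproper t && P t)) /=.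
    apply: eq_bigr => t /andP[_ Pt]; rewrite -sum1_card; apply: eq_bigl => s.
    by rewrite !inE; case: eqP => [->|]; rewrite ?Pt ?andbT ?andbF.
  by move=> s; rewrite inE => /andP[s_proper ->]; rewrite tproper_subtree_col ?w_size.
case: (pickP (@tproper b k m)) => [t0 t0_proper | no_proper].
  exists #|restr_fiber t0| => P; rewrite card_sum -sum_nat_const.
  apply: eq_big => [t | t /andP[t_proper _]]; first by rewrite inE.
  by apply/eqP; rewrite eqn_leq !card_restr_fiber_le.
exists 0 => P; rewrite card_sum muln0 big_pred0 // => t.
by rewrite no_proper.
Qed.

End Regluing.

Section Probability.
Local Open Scope R_scope.

Lemma Rdiv_le_of_le_mul (x y p : R) : 0 <= p -> 0 <= y -> x <= p * y -> x / y <= p.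
Proof.
move=> p_ge0 [y_gt0 | <-] x_le; last by rewrite /Rdiv Rinv_0 Rmult_0_r.
apply: (Rmult_le_reg_r y) => //; rewrite /Rdiv Rmult_assoc Rinv_l ?Rmult_1_r //; lra.
Qed.

Lemma card_not_frozen_le b h k p (v : vtx b h) : 0 <= p ->
  INR k.-1 * (INR (k - 2) + p) ^ b <= p * INR k.-1 ^ b ->
  INR #|[set s : coloring b h k | Defs.proper s && ~~ frozen s v]|
   <= p * INR #|[set s : coloring b h k | Defs.proper s]|.
Proof.
move=> p_ge0 colors_ineq; set m := (h - depth v)%nat.
have w_size : (size (word v) + m = h)%nat by rewrite size_word subnKC ?depth_le.
have [F card_restr] := card_restr_uniform k w_size.
have frozen_le : (#|[set s : coloring b h k | Defs.proper s && ~~ frozen s v]|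
    <= #|[set s : coloring b h k | Defs.proper s & ~~ tfrozen (subtree_col s m (word v))]|)%nat.
  apply/subset_leq_card/subsetP => s; rewrite !inE => /andP[-> /=].
  by apply: contra; apply: tfrozen_frozen.
apply: Rle_trans (le_INR _ _ (leP frozen_le)) _.
have -> : #|[set s : coloring b h k | Defs.proper s]| =
    #|[set s : coloring b h k | Defs.proper s & predT (subtree_col s m (word v))]|.
  by apply: eq_card => s; rewrite !inE andbT.
rewrite (card_restr (fun t => ~~ tfrozen t)) card_restr !mult_INR -Rmult_assoc.
apply: Rmult_le_compat_r; first exact: pos_INR.
apply: Rle_trans (tfrozen_ratio p_ge0 colors_ineq m) _; apply: Req_le.
by congr (_ * INR _); apply: eq_card => t; rewrite !inE andbT.
Qed.

End Probability.

Theorem lemma7 (C : R) :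
  (0 < C < 1)%R ->
  let eps := (1 / C - 1)%R in
  exists B : nat, forall b : nat, (B <= b)%N ->
    let k := num_colors eps b in
    forall (h : nat) (v : vtx b h),
      (prob_not_frozen b h k v <= Rpower (INR b) (- eps))%R.
Proof.
move=> C01 eps; have C_inv : (1 / C * C = 1)%R by field; lra.
have eps_gt0 : (0 < eps)%R by rewrite /eps; nra.
have [B colors_ineq] := many_colors_bound eps_gt0.
exists B => b /colors_ineq colors_b k h v; apply: Rdiv_le_of_le_mul.
- exact: Rlt_le (exp_pos _).
- exact: pos_INR.
- exact: card_not_frozen_le (Rlt_le _ _ (exp_pos _)) colors_b.
Qed.
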